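(* Let $d\ge 2$ and $\ell\ge 3$. The cyclic Kautz digraph $CK(d,\ell)$ is isomorphic to the line digraph of the subKautz digraph $sK(d,\ell-1)$, that is, $CK(d,\ell)\cong L(sK(d,\ell-1))$, via the map sending the arc $(x_1x_2\ldots x_{\ell-1},\,x_2\ldots x_{\ell-1}x_\ell)$ of $sK(d,\ell-1)$ to the vertex $x_1x_2\ldots x_\ell$ of $CK(d,\ell)$.
   Context: All words are over the alphabet $\mathbb Z_{d+1}=\{0,1,\ldots,d\}$. The subKautz digraph $sK(d,\ell)$ ($d,\ell\ge 2$) has vertex set $\{x_1x_2\ldots x_\ell : x_i\neq x_{i+1},\ i=1,\ldots,\ell-1\}$ and arcs $x_1x_2\ldots x_\ell\to x_2\ldots x_\ell x_{\ell+1}$ for every $x_{\ell+1}\in\mathbb Z_{d+1}$ with $x_{\ell+1}\neq x_1$ and $x_{\ell+1}\neq x_\ell$. The cyclic Kautz digraph $CK(d,\ell)$ has vertex set $\{x_1\ldots x_\ell : x_i\neq x_{i+1}\ (i=1,\ldots,\ell-1),\ x_\ell\neq x_1\}$ and arcs $x_1x_2\ldots x_\ell\to x_2\ldots x_\ell y$ for every $y\in\mathbb Z_{d+1}$ with $y\neq x_2$ and $y\neq x_\ell$. The line digraph $L(G)$ of a digraph $G$ has as vertices the arcs of $G$, with $(u,v)$ adjacent to $(w,z)$ in $L(G)$ iff $v=w$. *)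

From mathcomp Require Import all_boot.
Unset Strict Implicit. Unset Printing Implicit Defensive.

Definition word (d : nat) := seq 'I_d.+1.

Definition no_rep (d : nat) (x : word d) : bool := sorted (fun a b => a != b) x.

Definition sK_vertex (d l : nat) (x : word d) : bool := (size x == l) && @no_rep d x.

Definition sK_arc (d l : nat) (x y : word d) : Prop :=
  sK_vertex d l x /\ sK_vertex d l y /\
  exists z : 'I_d.+1,
    y = rcons (behead x) z /\ z != head ord0 x /\ z != last ord0 x.

Definition CK_vertex (d l : nat) (x : word d) : bool :=
  sK_vertex d l x && (last ord0 x != head ord0 x).

Definition CK_arc (d l : nat) (x y : word d) : Prop :=
  CK_vertex d l x /\ CK_vertex d l y /\
  exists z : 'I_d.+1,
    y = rcons (behead x) z /\ z != nth ord0 x 1 /\ z != last ord0 x.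

Definition line_vertex (T : Type) (A : T -> T -> Prop) (p : T * T) : Prop :=
  A p.1 p.2.

Definition line_arc (T : Type) (p q : T * T) : Prop := p.2 = q.1.

Definition dig_iso (T U : Type) (VG : T -> Prop) (AG : T -> T -> Prop)
  (VH : U -> Prop) (AH : U -> U -> Prop) (f : T -> U) : Prop :=
  [/\ (forall x, VG x -> VH (f x)),
      (forall x y, VG x -> VG y -> f x = f y -> x = y),
      (forall y, VH y -> exists2 x, VG x & f x = y) &
      (forall x y, VG x -> VG y -> (AG x y <-> AH (f x) (f y)))].

Definition arc_to_word (d : nat) (p : word d * word d) : word d :=
  rcons p.1 (last ord0 p.2).

From mathcomp Require Import all_boot.

Set Implicit Arguments.
Unset Strict Implicit.

(* A word x1 ... xl of CK(d,l) splits as the arc (x1 ... x(l-1), x2 ... xl) of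
   sK(d,l-1): both halves are sK-words, and the cyclic condition xl <> x1 together
   with x(l-1) <> xl is exactly the condition on the letter appended along an
   sK-arc.  Two such arcs are consecutive in the line digraph iff the second word
   is obtained from the first by a shift, and on CK-words of length at least 2 the
   side conditions of a CK-arc hold automatically for a shift. *)

Section KautzWords.

Variable d : nat.
Implicit Types (x y u v : word d) (z : 'I_d.+1).

Lemma behead_rcons x z : 0 < size x -> behead (rcons x z) = rcons (behead x) z.
Proof. by case: x. Qed.

Lemma sK_vertex_behead l x : sK_vertex d l.+1 x -> sK_vertex d l (behead x).
Proof.
by case: x => [|a s] //; rewrite /sK_vertex /no_rep /= eqSS => /andP [-> /path_sorted].
Qed.

Lemma CK_vertex_rcons l x z :
  CK_vertex d l.+2 (rcons x z) =
  [&& sK_vertex d l.+1 x, z != head ord0 x & z != last ord0 x].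
Proof.
case: x => [|a s]; first by rewrite /CK_vertex /sK_vertex.
rewrite /CK_vertex /sK_vertex /no_rep /= size_rcons rcons_path last_rcons.
by rewrite [last a s == z]eq_sym !eqSS -!andbA [(z != last a s) && _]andbC.
Qed.

Lemma sK_arcE l x y :
  sK_arc d l.+1 x y <->
  CK_vertex d l.+2 (rcons x (last ord0 y)) /\ y = behead (rcons x (last ord0 y)).
Proof.
have size_gt0 u : sK_vertex d l.+1 u -> 0 < size u by case/andP => /eqP ->.
split.
- case=> xV [_ [z [-> [zh zl]]]].
  by rewrite last_rcons CK_vertex_rcons xV zh zl behead_rcons ?size_gt0.
- set z := last ord0 y; clearbody z => -[wCK ->].
  have wV : sK_vertex d l.+2 (rcons x z) by case/andP: wCK.
  move: wCK; rewrite CK_vertex_rcons => /and3P [xV zh zl].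
  split=> //; split; first exact: sK_vertex_behead.
  by exists z; rewrite behead_rcons ?size_gt0.
Qed.

Lemma CK_arcE l u v :
  CK_vertex d l.+2 u -> CK_vertex d l.+2 v ->
  CK_arc d l.+2 u v <-> exists z, v = rcons (behead u) z.
Proof.
move=> uCK vCK; split=> [[_ [_ [z [-> _]]]] | [z ev]]; first by exists z.
do 2 split=> //; exists z; split=> //.
have [a [b [s eu]]] : exists a b s, u = [:: a, b & s].
  by case/andP: uCK => /andP []; case: (u) => [|a [|b s]] //; exists a, b, s.
by move: vCK; rewrite ev eu /= -rcons_cons CK_vertex_rcons => /and3P [].
Qed.

End KautzWords.

Theorem mainTheorem1 (d l : nat) (hd : 2 <= d) (hl : 3 <= l) :
  @dig_iso (word d * word d) (word d) (@line_vertex (word d) (sK_arc d l.-1)) (@line_arc (word d))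
          (fun x => CK_vertex d l x) (CK_arc d l) (arc_to_word d).
Proof.
case: l hl => [|[|[|l]]] // _.
have lineE (p : word d * word d) : line_vertex _ (sK_arc d l.+2) p <->
    CK_vertex d l.+3 (arc_to_word d p) /\ p.2 = behead (arc_to_word d p).
  exact: sK_arcE.
split.
- by move=> p /lineE [].
- move=> [x y] [x' y'] /lineE [_ /= ey] /lineE [_ /= ey'] exx'.
  have eyy' : y = y' by rewrite ey ey' exx'.
  by move: exx'; rewrite /arc_to_word /= eyy' => /rcons_inj [->].
- move=> w wCK; have /andP [/andP [/eqP w_size _] _] := wCK.
  case/lastP: w wCK w_size => [|x z] // wCK; rewrite size_rcons => -[x_size].
  have wE : arc_to_word d (x, behead (rcons x z)) = rcons x z.
    by rewrite /arc_to_word /= behead_rcons ?x_size // last_rcons.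
  by exists (x, behead (rcons x z)); [apply/lineE; rewrite wE |].
- move=> p q /lineE [pCK ep] /lineE [qCK _].
  apply: (iff_trans _ (iff_sym (CK_arcE pCK qCK))); rewrite /line_arc -ep.
  by split=> [-> | [z /rcons_inj [->]]] //; exists (last ord0 q.2).
Qed.
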